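(* Let $V\subset\mathbb{R}^d$ be a finite antichain, $p\in S_V$, $v\in D_p$ with $v_i=p_i$, and assume $v$ is not an $i$-witness for $p$. Then there is a minimum $u\in D_p$ such that $T_p(u)\subsetneq T_p(v)$ and $i\in T_p(v)\setminus T_p(u)$.
   Context: For $x,y\in\mathbb{R}^d$, $x\le y$ (dominance order) means $x_i\le y_i$ for all $i$; $y\rhd x$ means $y_i>x_i$ for all $i$; $y\rhd_i x$ means $y_i=x_i$ and $y_j>x_j$ for all $j\neq i$. $V\subset\mathbb{R}^d$ is a finite antichain in the dominance order (elements are called minima). The orthogonal surface $S_V$ is the topological boundary of $\langle V\rangle=\{x: x\ge v\text{ for some }v\in V\}$; equivalently $p\in S_V$ iff there is $v\in V$ with $v\le p$ and no $w\in V$ with $p\rhd w$. For $p\in S_V$, $D_p=\{v\in V:v\le p\}$ and for $v\in D_p$, $T_p(v)=\{i: p_i=v_i\}$. For $p\in S_V$, a minimum $v\in D_p$ is an $i$-witness for $p$ if there is $q\in S_V$ with $v\le p\le q$ and $q\rhd_i v$. *)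

(* Points of R^d are 'rV[R]_d (coordinate i is x 0 i),
   R an arbitrary realType (abstract real numbers). *)
From HB Require Import structures.
From mathcomp Require Import all_boot all_order all_algebra.
From mathcomp Require Import reals.
Set Implicit Arguments. Unset Strict Implicit. Unset Printing Implicit Defensive.
Import Order.TTheory GRing.Theory Num.Theory.
Local Open Scope ring_scope.

Section OrthSurf.
Variables (R : realType) (d : nat).
Local Notation pt := 'rV[R]_d.

Definition dle (x y : pt) : Prop := forall i : 'I_d, x 0 i <= y 0 i.
Definition dgt (y x : pt) : Prop := forall i : 'I_d, x 0 i < y 0 i.
Definition dgt_at (i : 'I_d) (y x : pt) : Prop :=
  y 0 i = x 0 i /\ forall j : 'I_d, j != i -> x 0 j < y 0 j.

Definition antichain (V : seq pt) : Prop :=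
  forall v w, v \in V -> w \in V -> dle v w -> v = w.

Definition on_surface (V : seq pt) (p : pt) : Prop :=
  (exists2 v, v \in V & dle v p) /\ ~ (exists2 w, w \in V & dgt p w).

Definition inD (V : seq pt) (p v : pt) : Prop := v \in V /\ dle v p.

Definition Tp (p v : pt) : {set 'I_d} := [set i | p 0 i == v 0 i].

Definition witness (V : seq pt) (i : 'I_d) (p v : pt) : Prop :=
  inD V p v /\
  exists q, [/\ on_surface V q, dle v p, dle p q & dgt_at i q v].

End OrthSurf.

From HB Require Import structures.
From mathcomp Require Import all_boot all_order all_algebra.
From mathcomp Require Import reals.
From Stdlib Require Import Classical.
Set Implicit Arguments. Unset Strict Implicit. Unset Printing Implicit Defensive.
Import Order.TTheory GRing.Theory Num.Theory.
Local Open Scope ring_scope.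

(* Raise p by a small e > 0 in the coordinates of T_p(v) other than i, giving a
   point q with q |>_i v. A minimum w with q |> w must lie below p (e is smaller
   than every positive gap w_j - p_j) and must have T_p(w) inside T_p(v) \ {i};
   so if no such u exists, q is on S_V and v is an i-witness. *)

Lemma exists_pos_le_pos {R : realDomainType} (s : seq R) :
  exists2 e : R, 0 < e & forall x, x \in s -> 0 < x -> e <= x.
Proof.
elim: s => [|x s [e e0 He]]; first by exists 1.
have [x0|x_le0] := ltP 0 x; last first.
  exists e => // y; rewrite in_cons => /predU1P[-> x_pos|/He//].
  by move: (lt_le_trans x_pos x_le0); rewrite ltxx.
exists (Num.min x e); first by rewrite lt_min x0.
move=> y; rewrite in_cons => /predU1P[-> _|ys y0]; first by rewrite ge_min lexx.
by rewrite ge_min (He y ys y0) orbT.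
Qed.

Section Raise.
Variables (R : realType) (d : nat) (p v : 'rV[R]_d) (i : 'I_d) (e : R).
Hypothesis e_gt0 : 0 < e.

Definition raise : 'rV[R]_d :=
  \row_j (if (j != i) && (p 0 j == v 0 j) then p 0 j + e else p 0 j).

Lemma raiseE j :
  raise 0 j = if (j != i) && (p 0 j == v 0 j) then p 0 j + e else p 0 j.
Proof. by rewrite mxE. Qed.

Lemma dle_raise : dle p raise.
Proof. by move=> j; rewrite raiseE; case: ifP => // _; rewrite lerDl ltW. Qed.

Lemma raise_dgt_at : dle v p -> v 0 i = p 0 i -> dgt_at i raise v.
Proof.
move=> vp vi; split=> [|j ji]; first by rewrite raiseE eqxx vi.
rewrite raiseE ji /=; have [<-|pv] := eqVneq (p 0 j) (v 0 j); first by rewrite ltrDl.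
by rewrite lt_neqAle eq_sym pv vp.
Qed.

Lemma raise_le j : raise 0 j <= p 0 j + e.
Proof. by rewrite raiseE; case: ifP => // _; rewrite lerDl ltW. Qed.

Lemma dgt_raise_below (w : 'rV[R]_d) :
  (forall j, p 0 j < w 0 j -> p 0 j + e <= w 0 j) ->
  dgt raise w -> dle w p /\ Tp p w \subset Tp p v :\ i.
Proof.
move=> gap wq; have w_le_p : dle w p.
  move=> j; rewrite leNgt; apply/negP => /gap pew.
  by have := lt_le_trans (wq j) (le_trans (raise_le j) pew); rewrite ltxx.
split=> //; apply/subsetP => j; rewrite !inE => /eqP pw.
by move: (wq j); rewrite raiseE -pw; case: ifP => // _; rewrite ltxx.
Qed.

End Raise.

Theorem lemma4p6 (R : realType) (d : nat) (V : seq 'rV[R]_d)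
    (p v : 'rV[R]_d) (i : 'I_d) :
  antichain V -> on_surface V p -> inD V p v ->
  v 0 i = p 0 i -> ~ witness V i p v ->
  exists u, [/\ inD V p u, Tp p u \proper Tp p v & i \in Tp p v :\: Tp p u].
Proof.
move=> _ _ [vV vp] vi not_witness; apply: NNPP => no_u; apply: not_witness.
have [e e_gt0 e_le] :=
  exists_pos_le_pos [seq (w : 'rV[R]_d) 0 j - p 0 j | w <- V, j <- enum 'I_d].
have gap w : w \in V -> forall j, p 0 j < w 0 j -> p 0 j + e <= w 0 j.
  move=> wV j pw; rewrite -lerBrDl e_le ?subr_gt0 //.
  exact: allpairs_f _ wV (mem_enum _ j).
have p_le_q := dle_raise p v i e_gt0.
split=> //; exists (raise p v i e); split=> //; last exact: raise_dgt_at.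
split; first by exists v => // j; exact: le_trans (vp j) (p_le_q j).
move=> [w wV /(dgt_raise_below e_gt0 (gap w wV)) [wp sub]].
have iv : i \in Tp p v by rewrite inE vi.
have iw : i \notin Tp p w by apply/negP => /(subsetP sub); rewrite !inE eqxx.
apply: no_u; exists w; split=> //; last by rewrite inE iw.
apply/properP; split; first exact: subset_trans sub (subD1set _ _).
by exists i.
Qed.
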